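(* Let $(T,f,\sqsubseteq_L)$ be a leaf-ordered merge tree. For $h\ge0$ define the relation $\le_h$ on $\mathbb{L}_h$ by: $x_1\le_h x_2$ iff $x_1=x_2$ or $u_1\sqsubseteq_L u_2$ for all leaves $u_1\in L(T_{x_1})$ and $u_2\in L(T_{x_2})$. Then for each $h\ge0$, $\le_h$ is a total order on $\mathbb{L}_h$.
   Context: A merge tree $(T,f)$: a finite rooted tree $T$ identified with its topological realisation, with a continuous $f\colon T\to\mathbb{R}\cup\{\infty\}$ strictly increasing towards the root, $f(v)=\infty$ iff $v$ is the root; lowest leaf at height $0$; $L(T)$ is the set of leaves and $L(T_x)$ the leaves in the subtree $T_x$ of descendants of $x$ (descendant: reachable by an $f$-decreasing path). $\mathrm{lca}$ is the lowest common ancestor; $\mathbb{L}_h=\{x:f(x)=h\}$. A leaf-order is a total order $\sqsubseteq_L$ on $L(T)$ that separates subtrees: for leaves $u,u_1,u_2$ with $u_1\sqsubseteq_L u\sqsubseteq_L u_2$, $u\in T_{\mathrm{lca}(u_1,u_2)}$. A leaf-ordered merge tree is $(T,f,\sqsubseteq_L)$. *)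

From mathcomp Require Import all_boot all_order all_algebra.
From mathcomp Require Import reals.
Set Implicit Arguments. Unset Strict Implicit. Unset Printing Implicit Defensive.
Import Order.TTheory GRing.Theory Num.Theory.
Local Open Scope ring_scope.

(* A merge tree: a finite rooted tree (vertex set V, parent map towards the
   root) with a height function on vertices, strictly increasing towards the
   root; the root has height +oo (its value [mt_h root] is ignored).
   The topological realisation is encoded in [point] below: every point of the
   realisation is either a vertex, or an interior point of the edge from a
   non-root vertex v to its parent, determined by its height h
   (f v < h < f (parent v)); since f is continuous and strictly increasing
   along each edge, this parametrisation of edge points by height is
   a homeomorphism. *)
Record mtree (R : realType) := MTree {
  mt_V : finType;
  mt_root : mt_V;
  mt_parent : mt_V -> mt_V;
  mt_h : mt_V -> R;
  mt_parent_root : mt_parent mt_root = mt_root;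
  mt_reach_root : forall v, exists n, iter n mt_parent v = mt_root;
  mt_incr : forall v, v != mt_root -> mt_parent v != mt_root ->
            mt_h v < mt_h (mt_parent v);
  mt_low : exists u, [/\ u != mt_root, (forall w, mt_parent w != u) & mt_h u = 0];
  mt_leaves_nonneg : forall u, u != mt_root -> (forall w, mt_parent w != u) ->
            0 <= mt_h u
}.

Section MergeTree.
Variables (R : realType) (T : mtree R).
Local Notation V := (mt_V T).
Local Notation root := (@mt_root R T).
Local Notation par := (@mt_parent R T).
Local Notation hv := (@mt_h R T).

Definition leaf (u : V) : Prop := u != root /\ forall w, par w != u.

Definition vanc (w v : V) : Prop := exists n, iter n par v = w.

Inductive point := Vert of V | Edge of V & R.

Definition is_point (x : point) : Prop :=
  match x with
  | Vert _ => True
  | Edge v h => [/\ v != root, hv v < h & (par v = root \/ h < hv (par v))]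
  end.

Definition lowv (x : point) : V := match x with Vert v => v | Edge v _ => v end.

Definition in_level (h : R) (x : point) : Prop :=
  is_point x /\
  match x with Vert v => v != root /\ hv v = h | Edge _ h' => h' = h end.

(* f(x) <= f(y), with f(root) = +oo *)
Definition fle (x y : point) : Prop :=
  match y with
  | Vert w => w = root \/
              match x with
              | Vert v => v != root /\ hv v <= hv w
              | Edge _ h => h <= hv w end
  | Edge _ h' => match x with
                 | Vert v => v != root /\ hv v <= h'
                 | Edge _ h => h <= h' end
  end.

(* [desc x y]: x is a descendant of y, i.e. y lies on the f-increasing path
   from x to the root (equivalently x is reachable from y along an
   f-decreasing path). *)
Definition desc (x y : point) : Prop := vanc (lowv y) (lowv x) /\ fle x y.

Definition is_lca (z x y : point) : Prop :=
  [/\ is_point z, desc x z, desc y z &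
      forall z', is_point z' -> desc x z' -> desc y z' -> desc z z'].

Definition leaf_below (u : V) (x : point) : Prop := leaf u /\ desc (Vert u) x.

(* a leaf order: a total order on L(T) separating subtrees *)
Definition leaf_order (ord : V -> V -> Prop) : Prop :=
  [/\ (forall u, leaf u -> ord u u),
      (forall u1 u2, leaf u1 -> leaf u2 -> ord u1 u2 -> ord u2 u1 -> u1 = u2),
      (forall u1 u2 u3, leaf u1 -> leaf u2 -> leaf u3 ->
          ord u1 u2 -> ord u2 u3 -> ord u1 u3),
      (forall u1 u2, leaf u1 -> leaf u2 -> ord u1 u2 \/ ord u2 u1) &
      (forall u1 u u2 z, leaf u1 -> leaf u -> leaf u2 ->
          ord u1 u -> ord u u2 -> is_lca z (Vert u1) (Vert u2) ->
          desc (Vert u) z)].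

Definition le_h (ord : V -> V -> Prop) (x1 x2 : point) : Prop :=
  x1 = x2 \/
  forall u1 u2, leaf_below u1 x1 -> leaf_below u2 x2 -> ord u1 u2.

End MergeTree.

Definition total_order_on (P : Type) (A : P -> Prop) (r : P -> P -> Prop) :=
  [/\ (forall x, A x -> r x x),
      (forall x y, A x -> A y -> r x y -> r y x -> x = y),
      (forall x y z, A x -> A y -> A z -> r x y -> r y z -> r x z) &
      (forall x y, A x -> A y -> r x y \/ r y x)].

From mathcomp Require Import all_boot all_order all_algebra.
From mathcomp Require Import reals boolp.
Import Order.TTheory GRing.Theory Num.Theory.
Local Open Scope ring_scope.
Set Implicit Arguments. Unset Strict Implicit.

(* The leaves below the points of a level L_h are nonempty, pairwise disjoint
   (two points of the same height cannot be comparable), and each forms an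
   interval of the leaf order, because a leaf order separates subtrees.
   Comparing the blocks of such a partition of a totally ordered set
   elementwise gives a total order on the blocks. *)

Section ConvexPartition.
Variables (L P : Type) (leafP : L -> Prop) (ord : L -> L -> Prop).
Variables (A : P -> Prop) (mem : L -> P -> Prop).

Definition block_le (x y : P) : Prop :=
  x = y \/ forall u v, mem u x -> mem v y -> ord u v.

Hypothesis ord_total : total_order_on leafP ord.
Hypothesis mem_leaf : forall u x, mem u x -> leafP u.
Hypothesis mem_exists : forall x, A x -> exists u, mem u x.
Hypothesis mem_disjoint :
  forall x y u, A x -> A y -> mem u x -> mem u y -> x = y.
Hypothesis mem_convex : forall x u1 u u2, A x -> leafP u ->
  ord u1 u -> ord u u2 -> mem u1 x -> mem u2 x -> mem u x.

Lemma block_le_anti x y : A x -> A y -> block_le x y -> block_le y x -> x = y.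
Proof.
move=> Ax Ay [//|xy] [//|yx].
have [[u xu] [v yv]] := (mem_exists Ax, mem_exists Ay).
case: ord_total => _ anti _ _.
have uv : u = v := anti _ _ (mem_leaf xu) (mem_leaf yv) (xy _ _ xu yv) (yx _ _ yv xu).
by apply: mem_disjoint Ax Ay xu _; rewrite uv.
Qed.

Lemma block_le_trans x y z : A y ->
  block_le x y -> block_le y z -> block_le x z.
Proof.
move=> Ay [<-//|xy] [<-|yz]; first by right.
right=> u w xu zw; have [v yv] := mem_exists Ay.
case: ord_total => _ _ tr _.
exact: (tr _ v) (mem_leaf xu) (mem_leaf yv) (mem_leaf zw) (xy _ _ xu yv) (yz _ _ yv zw).
Qed.

Lemma block_le_total x y : A x -> A y -> block_le x y \/ block_le y x.
Proof.
move=> Ax Ay; have [->|nxy] := pselect (x = y); first by left; left.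
have [xy|] := pselect (forall a b, mem a x -> mem b y -> ord a b).
  by left; right.
move=> /existsNP[a /existsNP[b /not_implyP[xa /not_implyP[yb nab]]]].
case: ord_total => _ _ _ tot.
have la := mem_leaf xa; have lb := mem_leaf yb.
have ba : ord b a by case: (tot _ _ la lb).
right; right=> b' a' yb' xa'.
have [la' lb'] := (mem_leaf xa', mem_leaf yb').
have [//|a'b'] := tot _ _ lb' la'.
case: nxy; have [a'b|ba'] := tot _ _ la' lb.
- exact: mem_disjoint Ax Ay (mem_convex Ax lb a'b ba xa' xa) yb.
- exact: mem_disjoint Ax Ay xa' (mem_convex Ay la' ba' a'b' yb yb').
Qed.

Lemma block_le_total_order : total_order_on A block_le.
Proof.
split; [by move=> x _; left | exact: block_le_anti | | exact: block_le_total].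
by move=> x y z _ Ay _; apply: block_le_trans.
Qed.

End ConvexPartition.

Section MergeTreeLevels.
Variables (R : realType) (T : mtree R).
Local Notation V := (mt_V T).
Local Notation root := (@mt_root R T).
Local Notation par := (@mt_parent R T).
Local Notation hv := (@mt_h R T).

Lemma iter_par_root n : iter n par root = root.
Proof. by elim: n => //= n ->; apply: mt_parent_root. Qed.

Lemma vanc_trans (w v u : V) : vanc w v -> vanc v u -> vanc w u.
Proof. by case=> m <- [n <-]; exists (m + n)%N; rewrite iterD. Qed.

Lemma vanc_total (p q u : V) : vanc p u -> vanc q u -> vanc q p \/ vanc p q.
Proof.
case=> a <- [b <-]; have [ab|ba] := leqP a b.
  by left; exists (b - a)%N; rewrite -iterD subnK.
by right; exists (a - b)%N; rewrite -iterD subnK // ltnW.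
Qed.

Lemma vanc_neq_root (w v : V) : vanc w v -> w != root -> v != root.
Proof. by case=> n <-; apply: contra => /eqP ->; rewrite iter_par_root. Qed.

Lemma vanc_hv_le (w v : V) : vanc w v -> w != root -> hv v <= hv w.
Proof.
case=> n <-; elim: n => [|n IHn] //= wr.
have nr : iter n par v != root.
  by apply: contra wr => /eqP ->; rewrite mt_parent_root.
exact: le_trans (IHn nr) (ltW (mt_incr nr wr)).
Qed.

Lemma vanc_desc (z : point T) (v : V) :
  is_point z -> vanc (lowv z) v -> desc (Vert v) z.
Proof.
move=> Pz vz; split=> //; case: z Pz vz => [c|c hc] /= Pz vz.
  have [->|cr] := eqVneq c root; first by left.
  by right; split; [apply: vanc_neq_root vz cr | apply: vanc_hv_le vz cr].
case: Pz => cr lt_c _; split; first exact: vanc_neq_root vz cr.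
exact: le_trans (vanc_hv_le vz cr) (ltW lt_c).
Qed.

Lemma leaf_belowP (u : V) (x : point T) :
  is_point x -> leaf_below u x <-> leaf u /\ vanc (lowv x) u.
Proof.
move=> Px; split; first by case=> lu [].
by case=> lu xu; split; last exact: vanc_desc.
Qed.

Lemma exists_leaf_vanc (v : V) : v != root -> exists2 u, leaf u & vanc v u.
Proof.
elim: {v}_.+1 {-2}v (ltnSn #|[set w | hv w < hv v]|) => // n IHn v.
rewrite ltnS => card_v vr.
have [/existsP[c /eqP cv]|/existsPn childless] := boolP [exists c, par c == v].
  have cr : c != root.
    by apply: contraNneq vr => cE; rewrite -cv cE mt_parent_root.
  have lt_cv : hv c < hv v by rewrite -cv mt_incr // cv.
  have [|u lu cu] := IHn c _ cr.
    apply: leq_trans card_v; apply: proper_card; apply/properP; split.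
      by apply/subsetP => w; rewrite !inE => /lt_trans; apply.
    by exists c; rewrite !inE ?ltxx.
  by exists u => //; apply: vanc_trans cu; exists 1%N.
by exists v; [split=> // w; apply: childless | exists 0%N].
Qed.

Lemma exists_leaf_below (x : point T) : is_point x -> exists u, leaf_below u x.
Proof.
move=> Px; suff [u lu xu] : exists2 u, leaf u & vanc (lowv x) u.
  by exists u; apply/leaf_belowP.
have [xr|] := eqVneq (lowv x) root; last exact: exists_leaf_vanc.
have [u [ur uc _]] := mt_low T; have [n un] := mt_reach_root u.
by exists u; [split | exists n; rewrite xr].
Qed.

Lemma lca_Vert_exists (u1 u2 : V) : exists z, is_lca z (Vert u1) (Vert u2).
Proof.
have ex_anc : exists n, `[< vanc (iter n par u1) u2 >].
  have [n En] := mt_reach_root u1; have [m Em] := mt_reach_root u2.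
  by exists n; apply/asboolP; rewrite En; exists m.
have [n /asboolP w_u2 min_n] := ex_minnP ex_anc.
set w := iter n par u1 in w_u2 *.
have w_u1 : vanc w u1 by exists n.
exists (Vert w); split=> //; [exact: vanc_desc | exact: vanc_desc |].
move=> z Pz [[m /= Em] _] [z_u2 _]; apply: vanc_desc => //=.
exists (m - n)%N; rewrite /w -iterD subnK //.
by apply: min_n; apply/asboolP; rewrite Em.
Qed.

Lemma leaf_below_convex (ord : V -> V -> Prop) (u1 u u2 : V) (x : point T) :
  leaf_order ord -> is_point x -> leaf u -> ord u1 u -> ord u u2 ->
  leaf_below u1 x -> leaf_below u2 x -> leaf_below u x.
Proof.
case=> _ _ _ _ separates Px lu u1u uu2 [l1 x_u1] [l2 x_u2].
have [z lca_z] := lca_Vert_exists u1 u2.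
have [z_u _] := separates _ _ _ _ l1 lu l2 u1u uu2 lca_z.
case: lca_z => Pz _ _ /(_ x Px x_u1 x_u2) [x_z _].
by apply/leaf_belowP => //; split; last exact: vanc_trans x_z z_u.
Qed.

Section Level.
Variable h : R.

Lemma in_level_lowv (x : point T) : in_level h x ->
  [/\ lowv x != root, hv (lowv x) <= h &
      par (lowv x) = root \/ h < hv (par (lowv x))].
Proof.
case: x => [v|v h'] /= [].
  move=> _ [vr <-]; split=> //.
  by have [|pr] := eqVneq (par v) root; [left | right; apply: mt_incr].
by case=> vr lt_v pv <-; split=> //; apply: ltW.
Qed.

Lemma in_level_lowv_inj (x1 x2 : point T) :
  in_level h x1 -> in_level h x2 -> lowv x1 = lowv x2 -> x1 = x2.
Proof.
case: x1 => [v1|v1 h1]; case: x2 => [v2|v2 h2] /= [P1 H1] [P2 H2] E; subst v2 => //.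
- by case: H1 => _ E; case: P2 => _ + _; rewrite E H2 ltxx.
- by case: H2 => _ E; case: P1 => _ + _; rewrite E H1 ltxx.
- by rewrite H1 H2.
Qed.

(* A strict ancestor of a point of L_h lies strictly above h. *)
Lemma in_level_vanc_eq (x1 x2 : point T) : in_level h x1 -> in_level h x2 ->
  vanc (lowv x2) (lowv x1) -> x1 = x2.
Proof.
move=> L1 L2 [[|k]]; first exact: in_level_lowv_inj.
rewrite iterSr => E.
have p_x2 : vanc (lowv x2) (par (lowv x1)) by exists k.
have [_ _ [p_root|lt_p]] := in_level_lowv L1; have [x2r le_x2 _] := in_level_lowv L2.
  by move: (vanc_neq_root p_x2 x2r); rewrite p_root eqxx.
have := lt_le_trans lt_p (le_trans (vanc_hv_le p_x2 x2r) le_x2).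
by rewrite ltxx.
Qed.

Lemma leaf_below_level_unique (x y : point T) (u : V) :
  in_level h x -> in_level h y -> leaf_below u x -> leaf_below u y -> x = y.
Proof.
move=> Lx Ly [_ [x_u _]] [_ [y_u _]].
have [yx|xy] := vanc_total x_u y_u.
  exact: in_level_vanc_eq.
exact/esym/in_level_vanc_eq.
Qed.

End Level.
End MergeTreeLevels.

Theorem lemma5 (R : realType) (T : mtree R) (ord : mt_V T -> mt_V T -> Prop)
  (Hord : @leaf_order R T ord) (h : R) (h0 : 0 <= h) :
  total_order_on (@in_level R T h) (@le_h R T ord).
Proof.
apply: (@block_le_total_order _ _ (@leaf R T) ord _ (@leaf_below R T)).
- by case: Hord => ? ? ? ? _; split.
- by move=> u x [].
- by move=> x [Px _]; apply: exists_leaf_below.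
- exact: leaf_below_level_unique.
- by move=> x u1 u u2 [Px _]; apply: leaf_below_convex.
Qed.
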